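(* In the fixed-flow two-parallel-path setting, for every integer $t\ge L$, $$\frac{b_{d_1d}(t-m+1)}{b_{d_2d}(t-n+1)}\;\ge\;\min\big(r_{d_1d}(t-m+1),\,r_{d_1d}(t-n+1)\big)\;\ge\; r_{\min}(t).$$
   Context: Model (linear decision rule). Directed graph $G=(V,E)$, source $s$, destination $d$, discrete time; pheromone $p_{uv}(t)$, forward flows $f_v(t)$, backward flows $b_v(t)$; leakages $l_v\in[0,1]$; decay $\delta\in(0,1)$; exogenous inputs $f_s(t),b_d(t)$. Edge flows: $f_{uv}(t)=f_u(t)p_{uv}(t)/\sum_{z:(u,z)\in E}p_{uz}(t)$, $b_{uv}(t)=b_v(t)p_{uv}(t)/\sum_{z:(z,v)\in E}p_{zv}(t)$ (at a vertex with a single outgoing, resp. incoming, edge the whole flow goes along it). Updates: $f_v(t+1)=(1-l_v)\sum_{z:(z,v)\in E}f_{zv}(t)$ for $v\neq s$, $b_u(t+1)=(1-l_u)\sum_{z:(u,z)\in E}b_{uz}(t)$ for $u\ne d$, $p_{uv}(t+1)=\delta(p_{uv}(t)+f_{uv}(t)+b_{uv}(t))$. Two parallel paths: $G$ is the union of directed paths $P_1,P_2$ from $s$ to $d$ sharing only $s,d$; $s_1,s_2$ are the successors of $s$ and $d_1,d_2$ the predecessors of $d$ on $P_1,P_2$; $m=\mathrm{len}(P_1)$, $n=\mathrm{len}(P_2)$ (numbers of edges), $L=\max(m,n)$. Potential: $r_{ss_1}(t)=p_{ss_1}(t)/p_{ss_2}(t)$, $r_{d_1d}(t)=p_{d_1d}(t)/p_{d_2d}(t)$,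 and for $t\ge L$, $r_{\min}(t)=\min\{r_{ss_1}(t-i),\,r_{d_1d}(t-i):0\le i\le L-1\}$. Fixed-flow setting: $f_s(t)=\bar f>0$ and $b_d(t)=\bar b>0$ for all $t$, and all initial pheromone levels $p_{uv}(0)$ are positive. *)

From Stdlib Require Import Reals Lra Lia.
Open Scope R_scope.

(* Two parallel paths P1 (side [true]) and P2 (side [false]) from s to d,
   with m = len P1, n = len P2 edges.  On side i the vertices are numbered
   0 .. len i, vertex 0 being s and vertex (len i) being d; edge (i,k),
   k < len i, goes from vertex k to vertex k+1 of side i.  Internal vertices
   are (i,k) with 1 <= k <= len i - 1.  So s_1 = (true,1), d_1 = (true,m-1),
   edge s s_1 = (true,0), edge d_1 d = (true, m-1), and likewise for P2. *)

Definition plen (m n : nat) (i : bool) : nat := if i then m else n.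


Definition fedge (m n : nat) (fbar : R) (p f : bool -> nat -> nat -> R) (i : bool) (k t : nat) : R :=
  if Nat.eqb k 0%nat
  then fbar * p i 0%nat t / (p true 0%nat t + p false 0%nat t)   (* u = s, f_s(t) = fbar *)
  else f i k t.                                       (* single outgoing edge *)

Definition bedge (m n : nat) (bbar : R) (p b : bool -> nat -> nat -> R) (i : bool) (k t : nat) : R :=
  if Nat.eqb k (plen m n i - 1)%nat
  then bbar * p i k t / (p true (m - 1)%nat t + p false (n - 1)%nat t) (* v = d, b_d(t) = bbar *)
  else b i (k + 1)%nat t.                                 (* single incoming edge *)

Definition fixed_flow_two_paths (m n : nat) (delta fbar bbar : R)
  (l : bool -> nat -> R) (ls ld : R)
  (p f b : bool -> nat -> nat -> R) (fd bs : nat -> R) : Prop :=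
  0 < delta < 1 /\ 0 < fbar /\ 0 < bbar /\
  0 <= ls <= 1 /\ 0 <= ld <= 1 /\
  (forall i k, (1 <= k <= plen m n i - 1)%nat -> 0 <= l i k <= 1) /\
  (forall i k, (k < plen m n i)%nat -> 0 < p i k 0%nat) /\
  (forall i k, (1 <= k <= plen m n i - 1)%nat -> 0 <= f i k 0%nat /\ 0 <= b i k 0%nat) /\
  0 <= fd 0%nat /\ 0 <= bs 0%nat /\
  (forall i k t, (1 <= k <= plen m n i - 1)%nat ->
     f i k (S t) = (1 - l i k) * fedge m n fbar p f i (k - 1)%nat t) /\
  (forall t, fd (S t) = (1 - ld) *
     (fedge m n fbar p f true (m - 1)%nat t + fedge m n fbar p f false (n - 1)%nat t)) /\
  (forall i k t, (1 <= k <= plen m n i - 1)%nat ->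
     b i k (S t) = (1 - l i k) * bedge m n bbar p b i k t) /\
  (forall t, bs (S t) = (1 - ls) *
     (bedge m n bbar p b true 0%nat t + bedge m n bbar p b false 0%nat t)) /\
  (forall i k t, (k < plen m n i)%nat ->
     p i k (S t) = delta * (p i k t + fedge m n fbar p f i k t
                                    + bedge m n bbar p b i k t)).

Definition r_ss1 (p : bool -> nat -> nat -> R) (t : nat) : R :=
  p true 0%nat t / p false 0%nat t.

Definition r_d1d (m n : nat) (p : bool -> nat -> nat -> R) (t : nat) : R :=
  p true (m - 1)%nat t / p false (n - 1)%nat t.

Fixpoint min_upto (g : nat -> R) (k : nat) : R :=
  match k with
  | O => g O
  | S k' => Rmin (min_upto g k') (g k)
  end.

Definition r_min (m n : nat) (p : bool -> nat -> nat -> R) (t : nat) : R :=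
  min_upto (fun i => Rmin (r_ss1 p (t - i)) (r_d1d m n p (t - i)))
           (Nat.max m n - 1).

(* The backward flows entering d along the two last edges are proportional to
   the pheromone shares of these edges: b_{d_i d}(T) = bbar p_{d_i d}(T) / S(T)
   with S(T) = p_{d_1 d}(T) + p_{d_2 d}(T).  Hence the ratio of the two flows,
   taken at times T = t-m+1 and T' = t-n+1, equals r (1 + r') / (1 + r) where
   r = r_{d_1 d}(T) and r' = r_{d_1 d}(T').  This quantity lies between r and
   r', so it is at least min(r, r') (lemma [share_ratio_ge_min]); positivity of
   all pheromone levels, needed for these manipulations, is an invariant of
   the dynamics ([state_ok_forever]).  The second inequality holds because
   T and T' are of the form t - i with i <= L - 1, so r_{d_1 d}(T) and
   r_{d_1 d}(T') are among the quantities minimised in r_min(t). *)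

From Stdlib Require Import Reals Lra Lia.
Open Scope R_scope.

Section Dynamics.

Variables (m n : nat) (delta fbar bbar : R) (l : bool -> nat -> R) (ls ld : R).
Variables (p f b : bool -> nat -> nat -> R) (fd bs : nat -> R).
Hypothesis hm : (1 <= m)%nat.
Hypothesis hn : (1 <= n)%nat.
Hypothesis Hdyn : fixed_flow_two_paths m n delta fbar bbar l ls ld p f b fd bs.

Definition state_ok (t : nat) : Prop :=
  (forall i k, (k < plen m n i)%nat -> 0 < p i k t) /\
  (forall i k, (1 <= k <= plen m n i - 1)%nat -> 0 <= f i k t /\ 0 <= b i k t).

Lemma normalisers_pos (t : nat) : state_ok t ->
  0 < p true 0%nat t + p false 0%nat t /\
  0 < p true (m - 1)%nat t + p false (n - 1)%nat t.
Proof.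
  intros [Hp _].
  assert (0 < p true 0%nat t) by (apply Hp; simpl; lia).
  assert (0 < p false 0%nat t) by (apply Hp; simpl; lia).
  assert (0 < p true (m - 1)%nat t) by (apply Hp; simpl; lia).
  assert (0 < p false (n - 1)%nat t) by (apply Hp; simpl; lia).
  split; lra.
Qed.

Lemma edge_flows_nonneg (t : nat) : state_ok t ->
  forall i k, (k < plen m n i)%nat ->
  0 <= fedge m n fbar p f i k t /\ 0 <= bedge m n bbar p b i k t.
Proof.
  intros Hok i k Hk.
  destruct (normalisers_pos t Hok) as [Hs Hd].
  destruct Hok as [Hp Hfb].
  destruct Hdyn as (_ & Hf & Hb & _).
  assert (Hpk : 0 <= p i k t) by (apply Rlt_le, Hp; exact Hk).
  split.
  - unfold fedge; destruct (Nat.eqb_spec k 0).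
    + subst k. apply Rmult_le_pos; [nra | apply Rlt_le, Rinv_0_lt_compat, Hs].
    + apply (Hfb i k). lia.
  - unfold bedge; destruct (Nat.eqb_spec k (plen m n i - 1)).
    + apply Rmult_le_pos; [nra | apply Rlt_le, Rinv_0_lt_compat, Hd].
    + apply (Hfb i (k + 1)%nat). lia.
Qed.

Lemma state_ok_step (t : nat) : state_ok t -> state_ok (S t).
Proof.
  intros Hok.
  pose proof (edge_flows_nonneg t Hok) as Hedge.
  destruct Hok as [Hp _].
  destruct Hdyn as (Hd & _ & _ & _ & _ & Hl & _ & _ & _ & _ & Hfu & _ & Hbu & _ & Hpu).
  split.
  - intros i k Hk. rewrite Hpu by exact Hk.
    specialize (Hp i k Hk). destruct (Hedge i k Hk).
    apply Rmult_lt_0_compat; lra.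
  - intros i k Hk. rewrite Hfu, Hbu by exact Hk.
    destruct (Hl i k Hk).
    destruct (Hedge i (k - 1)%nat ltac:(lia)) as [Hf _].
    destruct (Hedge i k ltac:(lia)) as [_ Hb].
    split; apply Rmult_le_pos; lra.
Qed.

Lemma state_ok_forever (t : nat) : state_ok t.
Proof.
  induction t as [|t IH].
  - destruct Hdyn as (_ & _ & _ & _ & _ & _ & Hp0 & Hfb0 & _). split; assumption.
  - exact (state_ok_step t IH).
Qed.

Lemma bedge_last (i : bool) (t : nat) :
  bedge m n bbar p b i (plen m n i - 1) t
  = bbar * p i (plen m n i - 1)%nat t
      / (p true (m - 1)%nat t + p false (n - 1)%nat t).
Proof. unfold bedge. now rewrite Nat.eqb_refl. Qed.

End Dynamics.

(* If side-1 receives the share x1/(x1+x2) at one time and side-2 the share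
   y2/(y1+y2) at another, the ratio of shares is r(1+r')/(1+r) with r = x1/x2,
   r' = y1/y2; it lies between r and r', hence dominates min(r, r'). *)
Lemma share_ratio_ge_min (x1 x2 y1 y2 : R) :
  0 < x1 -> 0 < x2 -> 0 < y1 -> 0 < y2 ->
  (x1 / (x1 + x2)) / (y2 / (y1 + y2)) >= Rmin (x1 / x2) (y1 / y2).
Proof.
  intros h1 h2 h3 h4.
  set (r := x1 / x2). set (r' := y1 / y2).
  assert (Hr : x1 = r * x2) by (unfold r; field; lra).
  assert (Hr' : y1 = r' * y2) by (unfold r'; field; lra).
  assert (rpos : 0 < r) by (unfold r; apply Rdiv_lt_0_compat; auto).
  assert (rpos' : 0 < r') by (unfold r'; apply Rdiv_lt_0_compat; auto).
  assert (E : (x1 / (x1 + x2)) / (y2 / (y1 + y2)) = r * (1 + r') / (1 + r)).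
  { rewrite Hr, Hr'. field. repeat split; nra. }
  rewrite E. apply Rle_ge.
  (* r (1 + r') / (1 + r) - r = r (r' - r) / (1 + r), and
     r' - r (1 + r') / (1 + r) = (r' - r) / (1 + r). *)
  apply (Rmult_le_reg_r (1 + r)); [lra |].
  replace (r * (1 + r') / (1 + r) * (1 + r)) with (r * (1 + r')) by (field; lra).
  destruct (Rle_dec r r').
  - rewrite Rmin_left by lra. nra.
  - rewrite Rmin_right by lra. nra.
Qed.

Lemma ratio_cancel_factor (c a1 s1 a2 s2 : R) :
  c <> 0 -> a2 <> 0 -> s1 <> 0 -> s2 <> 0 ->
  c * a1 / s1 / (c * a2 / s2) = (a1 / s1) / (a2 / s2).
Proof. intros. field. auto. Qed.

Lemma min_upto_le (g : nat -> R) (k i : nat) : (i <= k)%nat -> min_upto g k <= g i.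
Proof.
  induction k as [|k IH]; intros Hi.
  - replace i with 0%nat by lia. simpl; lra.
  - simpl. destruct (Nat.eq_dec i (S k)) as [-> | Hne].
    + apply Rmin_r.
    + eapply Rle_trans; [apply Rmin_l | apply IH; lia].
Qed.

Lemma r_min_le_r_d1d (m n : nat) (p : bool -> nat -> nat -> R) (t i : nat) :
  (i <= Nat.max m n - 1)%nat -> r_min m n p t <= r_d1d m n p (t - i).
Proof.
  intros Hi. unfold r_min.
  eapply Rle_trans; [apply (min_upto_le _ _ i Hi) | apply Rmin_r].
Qed.

Theorem mainTheorem6 (m n : nat) (hm : (1 <= m)%nat) (hn : (1 <= n)%nat)
  (hsimple : ~ (m = 1%nat /\ n = 1%nat))
  (delta fbar bbar : R) (l : bool -> nat -> R) (ls ld : R)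
  (p f b : bool -> nat -> nat -> R) (fd bs : nat -> R)
  (Hdyn : fixed_flow_two_paths m n delta fbar bbar l ls ld p f b fd bs)
  (t : nat) (ht : (Nat.max m n <= t)%nat) :
  bedge m n bbar p b true (m - 1) (t - m + 1)
    / bedge m n bbar p b false (n - 1) (t - n + 1)
  >= Rmin (r_d1d m n p (t - m + 1)) (r_d1d m n p (t - n + 1))
  /\ Rmin (r_d1d m n p (t - m + 1)) (r_d1d m n p (t - n + 1))
  >= r_min m n p t.
Proof.
  set (T := (t - m + 1)%nat); set (T' := (t - n + 1)%nat).
  assert (Hbbar : 0 < bbar) by (destruct Hdyn as (_ & _ & Hb & _); exact Hb).
  pose proof (state_ok_forever m n delta fbar bbar l ls ld p f b fd bs hm hn Hdyn)
    as Hok.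
  assert (Hpos : forall u, 0 < p true (m - 1)%nat u /\ 0 < p false (n - 1)%nat u).
  { intros u; destruct (Hok u) as [Hp _]; split; apply Hp; simpl; lia. }
  destruct (Hpos T) as [x1 x2]; destruct (Hpos T') as [y1 y2].
  split.
  - rewrite (bedge_last m n bbar p b true), (bedge_last m n bbar p b false); simpl.
    rewrite ratio_cancel_factor by lra.
    unfold r_d1d. apply share_ratio_ge_min; assumption.
  - apply Rle_ge, Rmin_glb.
    + replace T with (t - (m - 1))%nat by (unfold T; lia).
      apply r_min_le_r_d1d; lia.
    + replace T' with (t - (n - 1))%nat by (unfold T'; lia).
      apply r_min_le_r_d1d; lia.
Qed.
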